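(* Let $P$ be a set of primes and let $T$ be a map with $\mathcal O_T=s_P$. Let $k\ge1$ and write its prime decomposition as $k=\prod_{p\in P}p^{a_p}\cdot\prod_{p\in Q}p^{a_p}$, where $Q$ is the set of primes dividing $k$ that are not in $P$ (so $P\cap Q=\emptyset$). Then for every $n\ge1$, \[ \mathcal O_{T^k}(n)=\begin{cases}\displaystyle\prod_{p\in Q,\,p\mid n}p^{a_p}\cdot\prod_{p\in Q,\,p\nmid n}\sigma(p^{a_p}) & \text{if } p\nmid n \text{ for all } p\in P,\\[2mm] 0 & \text{if } p\mid n \text{ for some } p\in P,\end{cases} \] where $\sigma$ is the sum-of-divisors function.
   Context: For a map $T:X\to X$, $\mathcal O_T(n)$ denotes the number of closed orbits of length $n$ under $T$ (sets $\{x,Tx,\dots,T^{n-1}x\}$ with $T^nx=x$ of cardinality exactly $n$); $T^k$ is the $k$th iterate. For a set $P$ of primes, $s_P$ is the sequence with $s_P(n)=0$ if $p\mid n$ for some $p\in P$, and $s_P(n)=1$ otherwise. *)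

From HB Require Import structures.
From mathcomp Require Import all_boot all_order.
From mathcomp Require Import boolp classical_sets functions cardinality.
Set Implicit Arguments. Unset Strict Implicit. Unset Printing Implicit Defensive.
Local Open Scope classical_set_scope.

Definition orbit_set {X : Type} (T : X -> X) (n : nat) (x : X) : set X :=
  [set y | exists2 i, (i < n)%N & y = iter i T x].

Definition closed_orbits {X : Type} (T : X -> X) (n : nat) : set (set X) :=
  [set A | exists x, [/\ iter n T x = x, A = orbit_set T n x & (A #= `I_n)%card]].

(* O_T(n) = m : the number of closed orbits of length n is m. *)
Definition orbit_count_is {X : Type} (T : X -> X) (n m : nat) : Prop :=
  (closed_orbits T n #= `I_m)%card.

Definition sP (P : set nat) (n : nat) : nat :=
  if `[< exists2 p, P p & (p %| n)%N >] then 0%N else 1%N.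

Definition sigma (m : nat) : nat := (\sum_(d <- divisors m) d)%N.

From mathcomp Require Import all_boot all_order.
From mathcomp Require Import boolp classical_sets functions cardinality.
From mathcomp Require Import zify.
Set Implicit Arguments. Unset Strict Implicit. Unset Printing Implicit Defensive.
Local Open Scope classical_set_scope.

(* A point of exact T-period m has exact T^k-period m / gcd(m, k), and its
   T-cycle splits into gcd(m, k) cycles of T^k.  So the T^k-cycles of length n
   come from the T-cycles of length n g with gcd(n g, k) = g; as O_T = s_P there
   is exactly one such T-cycle when no prime of P divides n g, and none
   otherwise.  Hence O_{T^k}(n) is the sum of these g, which are the divisors of
   k whose p-adic valuation is 0 for p in P, that of k for p | n, and arbitrary
   for the other primes of k; this sum factors over the primes of k. *)

Section ExactPeriod.
Variables (X : Type) (f : X -> X).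

Definition exact_period (m : nat) (x : X) : Prop :=
  (0 < m)%N /\ forall i, iter i f x = x <-> (m %| i)%N.

Lemma iter_mul_fixed m x q : iter m f x = x -> iter (q * m) f x = x.
Proof. by move=> hx; elim: q => [|q IH] //=; rewrite mulSn iterD IH hx. Qed.

Lemma iter_mod_fixed m x i : iter m f x = x -> iter i f x = iter (i %% m) f x.
Proof. by move=> hx; rewrite {1}(divn_eq i m) addnC iterD iter_mul_fixed. Qed.

Lemma iterC i j x : iter i f (iter j f x) = iter j f (iter i f x).
Proof. by rewrite -!iterD addnC. Qed.

Lemma exact_period_fixed m x : exact_period m x -> iter m f x = x.
Proof. by case=> _ h; apply/h. Qed.

Lemma exact_periodP m x : (0 < m)%N -> iter m f x = x ->
  (forall i, (0 < i < m)%N -> iter i f x <> x) -> exact_period m x.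
Proof.
move=> m0 hx hmin; split=> // i; split=> [hi|/dvdnP[q ->]]; last exact: iter_mul_fixed.
case: (posnP (i %% m)) => [/eqP//|hpos]; exfalso.
by apply: (hmin (i %% m)); [rewrite hpos ltn_pmod | rewrite -(iter_mod_fixed i hx)].
Qed.

Lemma exact_period_eqmod m x i j :
  exact_period m x -> iter i f x = iter j f x -> i = j %[mod m].
Proof.
case=> m0 hx e; set t := m - i %% m.
(* [t] brings [iter i f x] back to [x], hence also [iter j f x]. *)
have ti : (m %| t + i)%N.
  have im : (i %% m <= m)%N by rewrite ltnW // ltn_pmod.
  rewrite /t addnC addnBA // {1}(divn_eq i m) addnAC addnK.
  by rewrite dvdn_add // dvdn_mull.
have tj : (m %| t + j)%N by apply/hx; rewrite iterD -e -iterD; apply/hx.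
by apply/eqP; rewrite -(eqn_modDl t) (eqP ti) (eqP tj).
Qed.

Lemma exact_period_iter m x i : exact_period m x -> exact_period m (iter i f x).
Proof.
move=> px; split=> [|j]; first exact: px.1.
split=> [e|/dvdnP[q ->]]; last first.
  by rewrite iterC iter_mul_fixed //; apply: exact_period_fixed.
have : j + i = 0 + i %[mod m] by apply: (exact_period_eqmod px); rewrite iterD e.
by move/eqP; rewrite eqn_modDr mod0n.
Qed.

Lemma exact_period_uniq m m' x : exact_period m x -> exact_period m' x -> m = m'.
Proof.
move=> px px'; apply/eqP; rewrite eqn_dvd.
by apply/andP; split; [apply/px.2/exact_period_fixed | apply/px'.2/exact_period_fixed].
Qed.

Lemma exact_period_exists N x : (0 < N)%N -> iter N f x = x -> exists m, exact_period m x.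
Proof.
move=> N0 hN.
have exP : exists i, (0 < i)%N && `[< iter i f x = x >] by exists N; rewrite N0 asboolT.
case: (ex_minnP exP) => m /andP[m0 /asboolP hm] hmin.
exists m; apply: exact_periodP => // i /andP[i0 im] hi.
by have := hmin i; rewrite i0 asboolT // => /(_ isT); lia.
Qed.

Lemma orbit_set_iter m x t : exact_period m x -> orbit_set f m x (iter t f x).
Proof.
move=> px; exists (t %% m); first by rewrite ltn_pmod // px.1.
exact/iter_mod_fixed/exact_period_fixed.
Qed.

Lemma orbit_set_self m x : exact_period m x -> orbit_set f m x x.
Proof. by move=> px; exists 0%N; first exact: px.1. Qed.

Lemma orbit_set_sub m x y :
  exact_period m x -> orbit_set f m x y -> orbit_set f m y `<=` orbit_set f m x.
Proof. by move=> px [i _ ->] z [j _ ->]; rewrite -iterD; apply: orbit_set_iter. Qed.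

Lemma orbit_set_eq m x y :
  exact_period m x -> orbit_set f m x y -> orbit_set f m y = orbit_set f m x.
Proof.
move=> px xy; apply/seteqP; split; first exact: orbit_set_sub.
case: xy => i im yE.
have py : exact_period m y by rewrite yE; exact: exact_period_iter.
apply: (orbit_set_sub py); have -> : x = iter (m - i) f y.
  by rewrite yE -iterD subnK ?(ltnW im) // exact_period_fixed.
exact: orbit_set_iter py.
Qed.

Lemma card_orbit_set m x : (0 < m)%N -> iter m f x = x ->
  (orbit_set f m x #= `I_m)%card <-> exact_period m x.
Proof.
move=> m0 hm; split=> [hc|px].
  apply: exact_periodP => // d /andP[d0 dm] hd.
  have sub : orbit_set f m x `<=` (fun i => iter i f x) @` `I_d.
    move=> z [i im ->]; exists (i %% d); first by rewrite /= ltn_pmod.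
    by rewrite -(iter_mod_fixed _ hd).
  have : (`I_m #<= `I_d)%card.
    apply: (card_le_trans (B := orbit_set f m x)).
      by move: hc; rewrite card_eq_sym card_eq_le => /andP[].
    apply: card_le_trans (subset_card_le sub) _; exact: card_image_le.
  by rewrite card_le_II; lia.
have -> : orbit_set f m x = (fun i => iter i f x) @` `I_m.
  by apply/seteqP; split=> z [i im e]; exists i.
apply: inj_card_eq => i j; rewrite !in_setE /= => im jm e.
by have := exact_period_eqmod px e; rewrite !modn_small.
Qed.

Lemma closed_orbitsE n A : (0 < n)%N ->
  closed_orbits f n A <-> exists x, exact_period n x /\ A = orbit_set f n x.
Proof.
move=> n0; split=> [[x [hx -> hc]]|[x [px ->]]].
  by exists x; split=> //; apply/(card_orbit_set n0 hx).
exists x; split=> //; first exact: exact_period_fixed.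
exact/(card_orbit_set n0 (exact_period_fixed px)).
Qed.

End ExactPeriod.

Lemma exact_period_iter_pow X (f : X -> X) m k x :
  exact_period f m x -> exact_period (iter k f) (m %/ gcdn m k) x.
Proof.
case=> m0 hx; set d := gcdn m k.
have d0 : (0 < d)%N by rewrite gcdn_gt0 m0.
have em : m = (m %/ d * d)%N by rewrite divnK // dvdn_gcdl.
have ek : k = (k %/ d * d)%N by rewrite divnK // dvdn_gcdr.
have cop : coprime (m %/ d) (k %/ d).
  by rewrite /coprime -(eqn_pmul2r d0) mul1n muln_gcdl -em -ek.
split=> [|i]; first by rewrite divn_gt0 // dvdn_leq // dvdn_gcdl.
by rewrite -iterM hx {1}em {1}ek mulnA dvdn_pmul2r // Gauss_dvdl.
Qed.

Lemma exact_period_of_iter_pow X (f : X -> X) k n y : (0 < k)%N ->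
  exact_period (iter k f) n y -> exists m, exact_period f m y /\ m = (n * gcdn m k)%N.
Proof.
move=> k0 py.
have nk0 : (0 < n * k)%N by rewrite muln_gt0 py.1 k0.
have [m pm] : exists m, exact_period f m y.
  by apply: (exact_period_exists nk0); rewrite iterM exact_period_fixed.
exists m; split=> //.
by rewrite (exact_period_uniq py (exact_period_iter_pow k pm)) divnK ?dvdn_gcdl.
Qed.

(* Bezout gives [m %| gcdn m k + a * k]: [q * a] steps of [iter k f] undo
   [q * gcdn m k] steps of [f]. *)
Lemma iter_pow_return X (f : X -> X) m k x i : exact_period f m x ->
  (gcdn m k %| i)%N -> exists j, iter j (iter k f) (iter i f x) = x.
Proof.
move=> px /dvdnP[q ->]; have [a _ ha] := Bezoutl k px.1.
exists (q * a)%N; rewrite -iterM -iterD -mulnA -mulnDr addnC.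
by case/dvdnP: ha => c ->; rewrite mulnA iter_mul_fixed // exact_period_fixed.
Qed.

Lemma card_set_seq (T : eqType) (s : seq T) : uniq s -> ([set` s] #= `I_(size s))%card.
Proof.
move=> us; case: s us => [|x0 s'] us; first by rewrite set_nil II0 card_eq00.
set s := x0 :: s' in us *.
have -> : [set` s] = nth x0 s @` `I_(size s).
  apply/seteqP; split=> [z zs|z [i i_s <-]]; last exact: mem_nth.
  exists (index z s); last exact: nth_index.
  by move: zs; rewrite /= -index_mem.
apply: inj_card_eq => i j; rewrite !in_setE /= => i_s j_s e.
by apply/eqP; rewrite -(nth_uniq x0 (s := s) i_s j_s us) e.
Qed.

Section IteratedOrbitCount.
Variables (X : Type) (T : X -> X) (b : nat -> bool) (c : nat -> X).

(* [b m] says whether [T] has a cycle of length [m]; [c m] is a point on it. *)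
Hypothesis c_period : forall m, (0 < m)%N -> b m -> exact_period T m (c m).
Hypothesis cycle_unique : forall m y,
  exact_period T m y -> b m /\ orbit_set T m y = orbit_set T m (c m).

Variables (k n : nat).
Hypotheses (k_gt0 : (0 < k)%N) (n_gt0 : (0 < n)%N).

Let G := [seq g <- divisors k | (gcdn (n * g) k == g) && b (n * g)].
Let S := [seq (g, j) | g <- G, j <- iota 0 g].
Let F (z : nat * nat) := orbit_set (iter k T) n (iter z.2 T (c (n * z.1))).

Lemma mem_cycle_index z :
  (z \in S) = [&& gcdn (n * z.1) k == z.1, b (n * z.1) & (z.2 < z.1)%N].
Proof.
case: z => g j /=; apply/allpairsPdep/and3P => [[g' [j' [gG jg [-> ->]]]]|[gE bg jg]].
  by move: gG jg; rewrite mem_filter mem_iota => /andP[/andP[-> ->] _].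
exists g, j; split=> //; last by rewrite mem_iota.
by rewrite mem_filter gE bg -dvdn_divisors // -(eqP gE) dvdn_gcdr.
Qed.

Lemma cycle_index_exact_period z : z \in S ->
  exact_period T (n * z.1) (c (n * z.1)) /\
  exact_period (iter k T) n (iter z.2 T (c (n * z.1))).
Proof.
case: z => g j; rewrite mem_cycle_index => /and3P[/= /eqP gE bg _].
have g_gt0 : (0 < g)%N by rewrite -gE gcdn_gt0 k_gt0 orbT.
have pc : exact_period T (n * g) (c (n * g)).
  by apply: c_period bg; rewrite muln_gt0 n_gt0.
split=> //.
by have := exact_period_iter_pow k (exact_period_iter j pc); rewrite gE mulnK.
Qed.

Lemma closed_orbits_iter_pow : closed_orbits (iter k T) n = F @` [set` S].
Proof.
apply/seteqP; split=> [A|A [z zS <-]]; last first.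
  apply/(closed_orbitsE _ _ n_gt0); eexists; split=> //.
  exact: (cycle_index_exact_period zS).2.
case/(closed_orbitsE _ _ n_gt0) => y [py ->].
have [m [pm mE]] := exact_period_of_iter_pow k_gt0 py.
set g := gcdn m k in mE.
have g_gt0 : (0 < g)%N by rewrite gcdn_gt0 pm.1.
have [bm e] := cycle_unique pm.
have [i _ yE] : orbit_set T m (c m) y by rewrite -e; exact: orbit_set_self.
have zS : (g, i %% g) \in S by rewrite mem_cycle_index /= -mE eqxx bm ltn_pmod.
exists (g, i %% g) => //; rewrite /F /= -mE; apply: (orbit_set_eq py).
have pc := exact_period_iter (i %% g) (c_period pm.1 bm).
have [j hj] := iter_pow_return (i := (i %/ g * g)%N) pc (dvdn_mull _ (dvdnn g)).
rewrite -iterD -divn_eq -yE in hj.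
by rewrite -hj; exact: orbit_set_iter.
Qed.

Lemma iter_pow_orbit_inj : {in [set` S] &, injective F}.
Proof.
move=> [g1 j1] [g2 j2]; rewrite !in_setE /= => z1S z2S eF.
have [pc1 pk1] := cycle_index_exact_period z1S.
have [pc2 _] := cycle_index_exact_period z2S.
move: (z1S) (z2S); rewrite !mem_cycle_index /= => /and3P[/eqP gE1 _ j1g] /and3P[_ _ j2g].
have [s _ e] : F (g2, j2) (iter j1 T (c (n * g1))).
  by rewrite -eF; exact: orbit_set_self pk1.
rewrite /= -iterM -iterD in e.
have g12 : g1 = g2.
  apply/eqP; rewrite -(eqn_pmul2l n_gt0); apply/eqP.
  apply: (exact_period_uniq (exact_period_iter j1 pc1)).
  by rewrite e; exact: exact_period_iter.
subst g2; have hm := exact_period_eqmod pc1 e.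
have : j1 = j2 %[mod g1].
  rewrite -(modn_dvdm j1 (dvdn_mull n (dvdnn g1))) hm modn_dvdm ?dvdn_mull //.
  have /dvdnP[q ->] : (g1 %| k)%N by rewrite -gE1 dvdn_gcdr.
  by rewrite mulnA modnMDl.
by rewrite !modn_small // => ->.
Qed.

Theorem orbit_count_iter_pow : orbit_count_is (iter k T) n
  (\sum_(g <- divisors k | (gcdn (n * g) k == g) && b (n * g)) g).
Proof.
have uS : uniq S.
  apply: allpairs_uniq_dep; first by rewrite filter_uniq ?divisors_uniq.
    by move=> g _; exact: iota_uniq.
  by move=> [? ?] [? ?] _ _ /= [-> ->].
have -> : (\sum_(g <- divisors k | (gcdn (n * g) k == g) && b (n * g)) g)%N = size S.
  rewrite size_allpairs_dep sumnE big_map -big_filter.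
  by apply: eq_bigr => g _; rewrite size_iota.
rewrite /orbit_count_is closed_orbits_iter_pow.
exact: card_eq_trans (inj_card_eq iter_pow_orbit_inj) (card_set_seq uS).
Qed.

End IteratedOrbitCount.

Lemma card_I1P (Y : Type) (A : set Y) : (A #= `I_1)%card ->
  exists2 a, A a & forall a', A a' -> a' = a.
Proof.
move/pcard_eqP => [g]; have [a Aa ga] : (g @` A) 0%N by apply: 'surj_g.
exists a => // a' Aa'; apply: 'inj_g; rewrite ?in_setE //.
by have := 'funS_g Aa'; rewrite /= ltnS leqn0 => /eqP->.
Qed.

Lemma cycle_representatives X (T : X -> X) (b : nat -> bool) : X ->
  (forall m, (0 < m)%N -> orbit_count_is T m (b m)) ->
  exists c : nat -> X,
    (forall m, (0 < m)%N -> b m -> exact_period T m (c m)) /\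
    (forall m y, exact_period T m y -> b m /\ orbit_set T m y = orbit_set T m (c m)).
Proof.
move=> x0 HT.
suff /choice[c hc] : forall m, exists x : X, ((0 < m)%N -> b m -> exact_period T m x) /\
    (forall y, exact_period T m y -> b m /\ orbit_set T m y = orbit_set T m x).
  by exists c; split=> [m|m]; [exact: (hc m).1 | exact: (hc m).2].
move=> m; case: (posnP m) => [->|m_gt0]; first by exists x0; split=> // y [].
have cyclesE A := closed_orbitsE T A m_gt0.
move: (HT m m_gt0); rewrite /orbit_count_is; case: (b m) => [/card_I1P[A] | ].
  case/cyclesE => x [px ->] Auniq; exists x; split=> // y py; split=> //.
  by apply: Auniq; apply/cyclesE; exists y.
rewrite II0 card_eq0 => /eqP no_cycle; exists x0; split=> // y py.
have : closed_orbits T m (orbit_set T m y) by apply/cyclesE; exists y.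
by rewrite no_cycle.
Qed.

Definition P_free (P : set nat) (m : nat) : bool := ~~ `[< exists2 p, P p & (p %| m)%N >].

Section PFree.
Variables (P : set nat) (P_prime : forall p, P p -> prime p).

Lemma P_freeM m m' : P_free P (m * m') = P_free P m && P_free P m'.
Proof.
rewrite /P_free -negb_or; congr negb; apply/asboolP/orP => [[p Pp]|].
  by rewrite Euclid_dvdM ?P_prime // => /orP[pm|pm]; [left|right]; apply/asboolP; exists p.
by case=> /asboolP[p Pp pm]; exists p => //; [exact: dvdn_mulr | exact: dvdn_mull].
Qed.

Lemma P_freeP m : (0 < m)%N -> reflect (forall q, P q -> logn q m = 0%N) (P_free P m).
Proof.
move=> m_gt0; apply: (iffP negP) => [nPm q Pq|h /asboolP[p Pp pm]].
  apply/eqP; rewrite -leqn0 leqNgt logn_gt0 mem_primes P_prime // m_gt0 /=.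
  by apply/negP => qm; apply: nPm; apply/asboolP; exists q.
by have /eqP := h p Pp; rewrite -leqn0 leqNgt logn_gt0 mem_primes P_prime // m_gt0 pm.
Qed.

End PFree.

Lemma logn_prime_pow q p e : prime p -> logn q (p ^ e) = if q == p then e else 0%N.
Proof. by move=> pp; rewrite lognX logn_prime //; case: eqP; rewrite ?muln1 ?muln0. Qed.

Fixpoint factor_products (A : nat -> seq nat) (r : seq nat) : seq nat :=
  if r is p :: r' then [seq p ^ e * d | e <- A p, d <- factor_products A r']%N
  else [:: 1%N].

Section FactorProducts.
Variable A : nat -> seq nat.

Lemma mem_factor_products r d : uniq r -> all prime r ->
  d \in factor_products A r <->
  [/\ (0 < d)%N, forall q, q \in r -> logn q d \in A q
                & forall q, q \notin r -> logn q d = 0%N].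
Proof.
elim: r d => [|p r IH] d ur ar.
  rewrite /= inE; split=> [/eqP->|[d0 _ h]]; first by split=> // q _; rewrite logn1.
  by apply/eqP/eqn_from_log => // q; rewrite logn1 h.
case/andP: ur => pr ur; case/andP: ar => pp ar.
have pe_gt0 e : (0 < p ^ e)%N by rewrite expn_gt0 prime_gt0.
split=> [/allpairsP[[e d'] [/= eA /(IH _ ur ar)[d'0 h1 h2] ->]]|[d0 h1 h2]].
  split=> [|q|q]; first by rewrite muln_gt0 pe_gt0.
    rewrite inE lognM // logn_prime_pow //.
    by case: eqP => [-> _|_ /= qr]; [rewrite h2 ?addn0 | rewrite add0n h1].
  by rewrite inE negb_or lognM // logn_prime_pow // => /andP[/negbTE-> qr]; exact: h2.
apply/allpairsP; set e := logn p d; have pd := pfactor_dvdnn p d.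
exists (e, d %/ p ^ e); split=> /=; first by apply: h1; rewrite inE eqxx.
  apply/(IH _ ur ar); split=> [|q qr|q qr]; first by rewrite divn_gt0 // dvdn_leq.
    have /negbTE qp : q != p by apply: contraNneq pr => <-.
    by rewrite logn_div // logn_prime_pow // qp subn0 h1 // inE qr orbT.
  rewrite logn_div // logn_prime_pow //; case: eqP => [->|/eqP qp]; first by rewrite subnn.
  by rewrite subn0 h2 // inE negb_or qp.
by rewrite mulnC divnK.
Qed.

Lemma factor_products_uniq r : uniq r -> all prime r -> (forall p, uniq (A p)) ->
  uniq (factor_products A r).
Proof.
elim: r => [|p r IH] // /andP[pr ur] /andP[pp ar] uA.
apply: allpairs_uniq => [||[e1 d1] [e2 d2]]; [exact: uA | exact: IH |].
move=> /allpairsP[[a1 b1] [/= _ hb1 [-> ->]]] /allpairsP[[a2 b2] [/= _ hb2 [-> ->]]] /= E.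
have [b1_gt0 _ h1] := (mem_factor_products _ ur ar).1 hb1.
have [b2_gt0 _ h2] := (mem_factor_products _ ur ar).1 hb2.
have pe_gt0 e : (0 < p ^ e)%N by rewrite expn_gt0 prime_gt0.
(* [p] does not divide [b1], [b2], so the exponents are read off with [logn p]. *)
have ea : a1 = a2.
  have := congr1 (logn p) E.
  by rewrite !lognM // !logn_prime_pow // eqxx h1 // h2 // !addn0.
by move: E; rewrite ea => /eqP; rewrite eqn_pmul2l // => /eqP->.
Qed.

Lemma sum_factor_products r :
  (\sum_(d <- factor_products A r) d = \prod_(p <- r) \sum_(e <- A p) p ^ e)%N.
Proof.
elim: r => [|p r IH]; first by rewrite big_seq1 big_nil.
rewrite big_allpairs_dep big_cons -IH big_distrl.
by apply: eq_bigr => e _; rewrite big_distrr.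
Qed.

End FactorProducts.

Lemma sigma_prime_pow p a : prime p -> sigma (p ^ a) = (\sum_(e <- iota 0 a.+1) p ^ e)%N.
Proof.
move=> pp; rewrite /sigma.
have hperm : perm_eq (divisors (p ^ a)) [seq p ^ e | e <- iota 0 a.+1]%N.
  apply: uniq_perm; first exact: divisors_uniq.
    by rewrite map_inj_uniq ?iota_uniq //; apply: expnI; apply: prime_gt1.
  move=> d; rewrite -dvdn_divisors ?expn_gt0 ?prime_gt0 //.
  apply/idP/idP => [/(dvdn_pfactor _ _ pp) [e ea ->]|/mapP [e ea ->]].
    by apply/mapP; exists e => //; rewrite mem_iota.
  by apply/(dvdn_pfactor _ _ pp); exists e => //; move: ea; rewrite mem_iota.
by rewrite (perm_big _ hperm) big_map.
Qed.

Lemma gcdn_mul_eqP n g k : (0 < n)%N -> (0 < g)%N -> (0 < k)%N ->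
  reflect (forall q, minn (logn q n + logn q g) (logn q k) = logn q g)
          (gcdn (n * g) k == g).
Proof.
move=> n0 g0 k0; have ng0 : (0 < n * g)%N by rewrite muln_gt0 n0.
apply: (iffP eqP) => [gE q|h].
  by have := congr1 (logn q) gE; rewrite logn_gcd // lognM.
apply: eqn_from_log => [||q]; rewrite ?gcdn_gt0 ?ng0 //.
by rewrite logn_gcd // lognM.
Qed.

Section GcdDivisorSum.
Variables (P : set nat) (n k : nat).
Hypotheses (P_prime : forall p, P p -> prime p) (n_gt0 : (0 < n)%N) (k_gt0 : (0 < k)%N).

(* The admissible exponents of a prime [p] in a divisor [g] of [k] with
   [gcdn (n * g) k = g] and [n * g] free of primes in [P]. *)
Definition exponent_choices (p : nat) : seq nat :=
  if p \in P then [:: 0%N] else if p %| n then [:: logn p k] else iota 0 (logn p k).+1.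

Lemma mem_exponent_choices p e : (e \in exponent_choices p) =
  if p \in P then e == 0%N else if p %| n then e == logn p k else (e <= logn p k)%N.
Proof.
rewrite /exponent_choices.
by case: ifP => _; [|case: ifP => _]; rewrite ?mem_iota ?inE ?add0n ?ltnS.
Qed.

Lemma gcd_divisorP g : P_free P n ->
  [&& gcdn (n * g) k == g, P_free P (n * g) & g \in divisors k] <->
  [/\ (0 < g)%N, forall q, q \in primes k -> logn q g \in exponent_choices q
                & forall q, q \notin primes k -> logn q g = 0%N].
Proof.
move=> nP; rewrite P_freeM // nP /= -dvdn_divisors //.
have vk q : q \notin primes k -> logn q k = 0%N.
  by move=> qk; apply/eqP; rewrite -leqn0 leqNgt logn_gt0.
have /(P_freeP P_prime n_gt0) vn := nP.
have dn q : q \in primes k -> (q %| n) = (0 < logn q n)%N.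
  by move=> /(allP (all_prime_primes k)) qp; rewrite logn_gt0 mem_primes qp n_gt0.
split=> [/and3P[gE Pg gk]|[g_gt0 h1 h2]].
  have g_gt0 := dvdn_gt0 k_gt0 gk.
  move/(gcdn_mul_eqP n_gt0 g_gt0 k_gt0): gE => h; move/(P_freeP P_prime g_gt0): Pg => vg.
  split=> // q; last by move=> /vk qk; have := h q; rewrite qk; lia.
  move=> qk; rewrite mem_exponent_choices; have := h q.
  case: ifPn => [|_]; first by rewrite in_setE => /vg ->.
  by rewrite dn //; case: ifPn => vq; lia.
have gE : gcdn (n * g) k == g.
  apply/(gcdn_mul_eqP n_gt0 g_gt0 k_gt0) => q.
  case: (boolP (q \in primes k)) => qk; last by rewrite vk // h2 //; lia.
  have := h1 q qk; rewrite mem_exponent_choices.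
  case: ifPn => [|_]; first by rewrite in_setE => /vn -> /eqP ->; lia.
  by rewrite dn //; case: ifPn => vq; lia.
rewrite gE /=; apply/andP; split; last by rewrite -(eqP gE) dvdn_gcdr.
apply/(P_freeP P_prime g_gt0) => q Pq.
case: (boolP (q \in primes k)) => qk; last exact: h2.
by have := h1 q qk; rewrite mem_exponent_choices ifT ?in_setE // => /eqP.
Qed.

Lemma gcd_divisors_perm : P_free P n ->
  perm_eq [seq g <- divisors k | (gcdn (n * g) k == g) && P_free P (n * g)]
          (factor_products exponent_choices (primes k)).
Proof.
move=> nP; apply: uniq_perm.
- by rewrite filter_uniq ?divisors_uniq.
- apply: factor_products_uniq; rewrite ?primes_uniq ?all_prime_primes // => p.
  by rewrite /exponent_choices; case: ifP => _; [|case: ifP => _]; rewrite ?iota_uniq.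
move=> g; rewrite mem_filter -andbA.
have memF := mem_factor_products exponent_choices g (primes_uniq k) (all_prime_primes k).
by apply/idP/idP => [/(gcd_divisorP _ nP)/memF.2 | /memF.1/(gcd_divisorP _ nP)].
Qed.

Lemma sum_exponent_choices p : prime p ->
  (\sum_(e <- exponent_choices p) p ^ e)%N =
  if p \in P then 1%N else if p %| n then p ^ logn p k else sigma (p ^ logn p k).
Proof.
move=> pp; rewrite /exponent_choices.
by case: ifP => _; [|case: ifP => _]; rewrite ?big_seq1 ?sigma_prime_pow.
Qed.

Lemma prod_sum_exponent_choices r : all prime r ->
  (\prod_(p <- r) \sum_(e <- exponent_choices p) p ^ e =
   \prod_(p <- r | (p \notin P) && (p %| n)) p ^ logn p k *
   \prod_(p <- r | (p \notin P) && ~~ (p %| n)) sigma (p ^ logn p k))%N.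
Proof.
elim: r => [|p r IH]; first by rewrite !big_nil.
case/andP=> pp ar; rewrite !big_cons sum_exponent_choices // IH //.
case: (p \in P); case: (p %| n) => /=;
  [exact: mul1n | exact: mul1n | exact: mulnA | exact: mulnCA].
Qed.

Lemma sum_gcd_divisors :
  (\sum_(g <- divisors k | (gcdn (n * g) k == g) && P_free P (n * g)) g =
   if P_free P n then
     \prod_(p <- primes k | (p \notin P) && (p %| n)) p ^ logn p k *
     \prod_(p <- primes k | (p \notin P) && ~~ (p %| n)) sigma (p ^ logn p k)
   else 0)%N.
Proof.
case: ifP => nP; last by rewrite big1 // => g; rewrite P_freeM // nP andbF.
rewrite -big_filter (perm_big _ (gcd_divisors_perm nP)) sum_factor_products.
exact/prod_sum_exponent_choices/all_prime_primes.
Qed.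

End GcdDivisorSum.

Theorem lemma3p2 (X : Type) (T : X -> X) (P : set nat)
  (HP : forall p, P p -> prime p)
  (HT : forall n, (0 < n)%N -> orbit_count_is T n (sP P n))
  (k : nat) (hk : (0 < k)%N) :
  forall n, (0 < n)%N ->
    orbit_count_is (iter k T) n
      (if `[< exists2 p, P p & (p %| n)%N >] then 0%N
       else (\prod_(p <- primes k | (p \notin P) && (p %| n)) p ^ logn p k *
             \prod_(p <- primes k | (p \notin P) && ~~ (p %| n))
                sigma (p ^ logn p k))%N).
Proof.
move=> n n_gt0.
have HT' m : (0 < m)%N -> orbit_count_is T m (P_free P m).
  by move=> m_gt0; have := HT m m_gt0; rewrite /sP /P_free; case: asboolP.
have P_free1 : P_free P 1 by apply/(P_freeP HP) => // q _; exact: logn1.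
have := HT' 1%N isT; rewrite P_free1 => /card_I1P[_ [x1 _] _].
have [c [c_period cycle_unique]] := cycle_representatives x1 HT'.
have := orbit_count_iter_pow c_period cycle_unique hk n_gt0.
by rewrite sum_gcd_divisors // /P_free; case: asboolP.
Qed.
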